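(* Let $\kappa$ be an infinite cardinal, let $(G_\alpha:\alpha<\kappa)$ be topological groups, let $G=\prod_{\alpha<\kappa}G_\alpha$ with the product topology and coordinatewise operation, and let $X\subseteq G$. Then the following are equivalent: (1) $X$ is Rothberger bounded in $G$; (2) for each countable set $C\subseteq\kappa$, the set $X_C=\{f\restriction C:f\in X\}$ is a Rothberger bounded subset of $G_C=\prod_{\alpha\in C}G_\alpha$.
   Context: All topological groups are assumed Tychonoff. A subset $X$ of a topological group $(H,* )$ is Rothberger bounded if for every sequence $(U_n:n<\omega)$ of open neighborhoods of the identity there are $h_n\in H$ with $X\subseteq\bigcup_n h_n*U_n$. *)

From HB Require Import structures.
From mathcomp Require Import all_boot all_order all_algebra.
From mathcomp Require Import all_classical all_reals all_analysis.
Set Implicit Arguments. Unset Strict Implicit. Unset Printing Implicit Defensive.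
Local Open Scope classical_set_scope.

(* For topological groups, Hausdorff (even T0) is equivalent to Tychonoff,
   so we record the separation assumption as [hausdorff_space]. *)
Record topGroup := TopGroup {
  tg_carrier :> topologicalType;
  tg_mul : tg_carrier -> tg_carrier -> tg_carrier;
  tg_inv : tg_carrier -> tg_carrier;
  tg_one : tg_carrier;
  tg_mulA : forall x y z, tg_mul x (tg_mul y z) = tg_mul (tg_mul x y) z;
  tg_mul1g : forall x, tg_mul tg_one x = x;
  tg_mulg1 : forall x, tg_mul x tg_one = x;
  tg_mulVg : forall x, tg_mul (tg_inv x) x = tg_one;
  tg_mulgV : forall x, tg_mul x (tg_inv x) = tg_one;
  tg_mul_cont : continuous (fun p : tg_carrier * tg_carrier => tg_mul p.1 p.2);
  tg_inv_cont : continuous tg_inv;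
  tg_hausdorff : hausdorff_space tg_carrier
}.

Definition rothberger_bounded (H : topologicalType) (mul : H -> H -> H)
  (one : H) (X : set H) : Prop :=
  forall U : nat -> set H, (forall n, open_nbhs one (U n)) ->
  exists h : nat -> H,
    X `<=` \bigcup_(n in [set: nat]) [set mul (h n) u | u in U n].

Definition prodG (I : Type) (G : I -> topGroup) : topologicalType :=
  prod_topology (fun i => tg_carrier (G i)).

Definition prod_mul (I : Type) (G : I -> topGroup)
  (f g : prodG G) : prodG G := fun i => tg_mul (f i) (g i).
Definition prod_one (I : Type) (G : I -> topGroup) : prodG G :=
  fun i => tg_one (G i).

Definition restr (I : Type) (G : I -> topGroup) (C : set I)
  (f : prodG G) : prodG (fun c : C => G (val c)) := fun c => f (val c).

From HB Require Import structures.
From mathcomp Require Import all_boot all_order all_algebra.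
From mathcomp Require Import all_classical all_reals all_analysis.
From mathcomp Require Import finmap.
Local Open Scope classical_set_scope.

(* Restriction to a set C of coordinates is a continuous homomorphism, so it
   preserves Rothberger boundedness.  Conversely, every neighbourhood of the
   identity of the product contains an open one that depends only on finitely
   many coordinates; for a sequence (U_n) these coordinates form a countable
   set C.  Covering X_C by translates of the pulled-back neighbourhoods and
   extending the translating elements by the identity outside C then covers X,
   because membership in the chosen neighbourhoods is decided on C. *)

Section product_topology.
Context {I : Type} {K : I -> topologicalType}.

Definition depends_only_on (S : set I) (W : set (prod_topology K)) :=
  forall y z : prod_topology K, (forall i, S i -> y i = z i) -> W y -> W z.

Lemma proj_prod_continuous (i : I) :
  continuous (fun f : prod_topology K => f i).
Proof. exact: (@proj_continuous {classic I} K i). Qed.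

Lemma continuous_into_prod (T : topologicalType) (e : T -> prod_topology K) :
  (forall i, continuous (fun t => e t i)) -> continuous e.
Proof.
move=> ce t; apply/cvg_sup => i U [V [[W oW <-] WeV VU]].
apply: filterS VU _; exact: ce i t W (open_nbhs_nbhs (conj oW WeV)).
Qed.

Lemma nbhs_prod_finite_support (x : prod_topology K) (U : set (prod_topology K)) :
  nbhs x U -> exists S : set I, finite_set S /\
    exists W, [/\ open_nbhs x W, W `<=` U & depends_only_on S W].
Proof.
move=> [P [[Q QfinP <-] [V QV Vx]] PU].
have [L LQ VL] := QfinP _ QV.
have /choice[idx Hidx] : forall M : fset_sub_type L, exists i,
    exists2 N : set (K i), open N & (fun f : prod_topology K => f i) @^-1` N = fsval M.
  by move=> M; have /set_mem[i _ [N oN NM]] := LQ _ (fsvalP M); exists i, N.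
exists (range idx); split; first by apply: finite_image; exact: finite_finset.
exists V; split.
- split=> //; exists [set V]; last by rewrite bigcup_set1.
  by move=> _ ->; exact: QfinP.
- by move=> y Vy; apply: PU; exists V.
- move=> y z yz; rewrite -VL => Vy M LM.
  have [N _ NM] := Hidx (FSetSub LM).
  by move: (Vy M LM); rewrite /= in NM; rewrite -NM /= yz.
Qed.

End product_topology.

Lemma rothberger_bounded_image (H K : topologicalType)
    (mulH : H -> H -> H) (oneH : H) (mulK : K -> K -> K) (oneK : K)
    (phi : H -> K) (X : set H) :
  continuous phi -> {morph phi : a b / mulH a b >-> mulK a b} ->
  phi oneH = oneK ->
  rothberger_bounded mulH oneH X -> rothberger_bounded mulK oneK (phi @` X).
Proof.
move=> cphi phiM phi1 RX U oU.
have oUphi n : open_nbhs oneH (phi @^-1` U n).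
  split; [exact: open_comp (fun x _ => cphi x) (proj1 (oU n))|].
  by rewrite /= phi1; exact: (proj2 (oU n)).
have [h Xh] := RX _ oUphi.
exists (phi \o h) => _ [f /Xh[n _ [u Uu <-]] <-].
by exists n => //; exists (phi u); rewrite // phiM.
Qed.

Definition prod_inv {I : Type} {G : I -> topGroup} (f : prodG G) : prodG G :=
  fun i => tg_inv (f i).

Lemma tg_mulKg (G : topGroup) (x y : G) : tg_mul (tg_inv x) (tg_mul x y) = y.
Proof. by rewrite tg_mulA tg_mulVg tg_mul1g. Qed.

Lemma prod_mulKVg (I : Type) (G : I -> topGroup) (g f : prodG G) :
  prod_mul g (prod_mul (prod_inv g) f) = f.
Proof.
apply: functional_extensionality_dep => i.
by rewrite /prod_mul /prod_inv tg_mulA tg_mulgV tg_mul1g.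
Qed.

Section restriction.
Context {I : Type} (G : I -> topGroup) (C : set I).

Let GC := fun c : C => G (val c).

Definition extend_by_one (g : prodG GC) : prodG G :=
  fun i => match pselect (C i) with
           | left Ci => g (exist _ i (mem_set Ci))
           | right _ => tg_one (G i) end.

Lemma extend_by_one_in (g : prodG GC) (c : C) : extend_by_one g (val c) = g c.
Proof.
case: c => i Ci; rewrite /extend_by_one /=.
case: pselect => [Ci'|]; last by move: (set_mem Ci).
by rewrite (Prop_irrelevance (mem_set Ci') Ci).
Qed.

Lemma extend_by_one_continuous : continuous extend_by_one.
Proof.
apply: continuous_into_prod => i; rewrite /extend_by_one.
case: pselect => [Ci|_]; last exact: cst_continuous.
exact: (@proj_prod_continuous C (fun c : C => G (val c))
          (exist _ i (mem_set Ci))).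
Qed.

Lemma extend_by_one1 : extend_by_one (prod_one GC) = prod_one G.
Proof.
by apply: functional_extensionality_dep => i; rewrite /extend_by_one; case: pselect.
Qed.

Lemma restr_continuous : continuous (@restr I G C).
Proof. by apply: continuous_into_prod => c; exact: proj_prod_continuous. Qed.

Lemma rothberger_bounded_restr (X : set (prodG G)) :
  rothberger_bounded (@prod_mul I G) (prod_one G) X ->
  rothberger_bounded (@prod_mul C GC) (prod_one GC) (@restr I G C @` X).
Proof. exact: rothberger_bounded_image restr_continuous (fun _ _ => erefl) erefl. Qed.

End restriction.

Lemma rothberger_bounded_of_restr (I : Type) (G : I -> topGroup)
    (X : set (prodG G)) :
  (forall C : set I, countable C ->
     rothberger_bounded (@prod_mul C (fun c => G (val c)))
       (prod_one (fun c : C => G (val c))) (@restr I G C @` X)) ->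
  rothberger_bounded (@prod_mul I G) (prod_one G) X.
Proof.
move=> RXC U oU.
have /choice[S SW] : forall n, exists S : set I, finite_set S /\
    exists W, [/\ open_nbhs (prod_one G) W, W `<=` U n & depends_only_on S W].
  by move=> n; apply: nbhs_prod_finite_support; exact: open_nbhs_nbhs.
have /choice[W HW] : forall n, exists W,
    [/\ open_nbhs (prod_one G) W, W `<=` U n & depends_only_on (S n) W].
  by move=> n; case: (SW n).
pose C := \bigcup_n S n.
have cC : countable C.
  by apply: bigcup_countable => // n _; apply: finite_set_countable; case: (SW n).
have oWC n : open_nbhs (prod_one (fun c : C => G (val c)))
                       (extend_by_one G C @^-1` W n).
  have [[oW W1] _ _] := HW n.
  split; first exact: open_comp (fun x _ => extend_by_one_continuous G C x) oW.
  by rewrite /= extend_by_one1.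
have [h Xh] := RXC C cC _ oWC.
exists (fun n => extend_by_one G C (h n)) => f Xf.
have [n _ [v Wv hv]] := Xh _ (ex_intro2 _ _ f Xf erefl).
have [_ WU Wdep] := HW n.
exists n => //; exists (prod_mul (prod_inv (extend_by_one G C (h n))) f);
  last exact: prod_mulKVg.
apply/WU/(Wdep _ _ _ Wv) => i Si.
have Ci : C i by exists n.
pose c : C := exist _ i (mem_set Ci).
have fi : f i = tg_mul (h n c) (v c) := esym (congr1 (fun g => g c) hv).
by rewrite /prod_mul /prod_inv !(extend_by_one_in G C _ c) fi tg_mulKg.
Qed.

Theorem lemma4 (I : Type) (hI : infinite_set [set: I]) (G : I -> topGroup)
  (X : set (prodG G)) :
  rothberger_bounded (@prod_mul I G) (prod_one G) X <->
  (forall C : set I, countable C ->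
     rothberger_bounded (@prod_mul C (fun c => G (val c)))
       (prod_one (fun c : C => G (val c))) (@restr I G C @` X)).
Proof.
split; last exact: rothberger_bounded_of_restr.
by move=> RX C _; exact: rothberger_bounded_restr.
Qed.
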